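(* If the matrix $i\begin{pmatrix}\langle U_\alpha,\bar U_{\bar\beta}\rangle&\langle U_\alpha,V\rangle\\ \langle\bar V,\bar U_{\bar\beta}\rangle&\langle\bar V,V\rangle\end{pmatrix}$ is positive definite, then the $(n+1)\times(n+1)$ matrix $\begin{pmatrix}\mathcal{D}_\alpha X^I&\bar X^I\end{pmatrix}$ (columns indexed by $\alpha=1,\dots,n$ and one extra column) is invertible.
   Context: $V=\begin{pmatrix}X^I\\ F_I\end{pmatrix}$ ($I=0,\dots,n$) over an $n$-dimensional Kähler manifold with coordinates $z^\alpha$ and Kähler potential $K$; $U_\alpha=\mathcal{D}_\alpha V=\begin{pmatrix}\mathcal{D}_\alpha X^I\\ \mathcal{D}_\alpha F_I\end{pmatrix}$ with $\mathcal{D}_\alpha V=\partial_\alpha V+\tfrac12(\partial_\alpha K)V$, and $\bar U_{\bar\alpha}$ its complex conjugate; $\langle A,B\rangle=A^T\Omega B$ with $\Omega=\begin{pmatrix}0&\mathbb{1}\\-\mathbb{1}&0\end{pmatrix}$. *)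

From HB Require Import structures.
From mathcomp Require Import all_boot all_order all_algebra.
Set Implicit Arguments. Unset Strict Implicit. Unset Printing Implicit Defensive.
Import Order.TTheory GRing.Theory Num.Theory.
Local Open Scope ring_scope.

(* A symplectic vector (X^I, F_I), I = 0..m-1, stored as a pair of columns. *)
Definition svec (C : numClosedFieldType) (m : nat) : Type :=
  ('cV[C]_m * 'cV[C]_m)%type.

(* <A, B> = A^T Omega B with Omega = [[0, 1], [-1, 0]] *)
Definition sympl (C : numClosedFieldType) (m : nat) (A B : svec C m) : C :=
  \sum_(i < m) (A.1 i 0 * B.2 i 0 - A.2 i 0 * B.1 i 0).

Definition sconj (C : numClosedFieldType) (m : nat) (A : svec C m) : svec C m :=
  (map_mx (@Num.conj C) A.1, map_mx (@Num.conj C) A.2).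

(* The family (U_1, ..., U_n, conj V), indexed by 'I_n.+1, the last index
   (ord_max) corresponding to conj V. *)
Definition Wfam (C : numClosedFieldType) (n : nat)
  (U : 'I_n -> svec C n.+1) (V : svec C n.+1) (a : 'I_n.+1) : svec C n.+1 :=
  match unlift ord_max a with Some al => U al | None => sconj V end.

Definition metric_mx (C : numClosedFieldType) (n : nat)
  (U : 'I_n -> svec C n.+1) (V : svec C n.+1) : 'M[C]_n.+1 :=
  \matrix_(a, b) ('i * sympl (Wfam U V a) (sconj (Wfam U V b))).

(* (D_alpha X^I | conj X^I): rows indexed by I, columns by alpha and one extra *)
Definition X_mx (C : numClosedFieldType) (n : nat)
  (U : 'I_n -> svec C n.+1) (V : svec C n.+1) : 'M[C]_n.+1 :=
  \matrix_(I, a) (Wfam U V a).1 I 0.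

Definition posdef (C : numClosedFieldType) (m : nat) (M : 'M[C]_m) : Prop :=
  forall x : 'cV[C]_m, x != 0 ->
    0 < (((map_mx (@Num.conj C) x)^T *m M *m x) 0 0).

From mathcomp Require Import all_boot all_order all_algebra.
Set Implicit Arguments. Unset Strict Implicit. Unset Printing Implicit Defensive.
Import Order.TTheory GRing.Theory Num.Theory.
Local Open Scope ring_scope.

(* Suppose a combination [Z = sum_a y_a W_a] of the vectors [W = (U_1, ...,
   U_n, conj V)] has vanishing [X]-part, i.e. [y] lies in the kernel of the
   matrix [(D_alpha X^I | conj X^I)].  Then [<Z, conj Z> = 0], since [{X = 0}]
   is Lagrangian; but [i <Z, conj Z>] is the value of the metric form at
   [conj y], so positive definiteness forces [y = 0]. *)

Section SymplecticGram.
Variables (C : numClosedFieldType) (m k : nat) (W : 'I_k -> svec C m).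

Local Notation conjmx A := (map_mx (@Num.conj C) A).

Definition xpart_mx : 'M[C]_(m, k) := \matrix_(I, a) (W a).1 I 0.
Definition fpart_mx : 'M[C]_(m, k) := \matrix_(I, a) (W a).2 I 0.

Definition gram_mx : 'M[C]_k :=
  \matrix_(a, b) ('i * sympl (W a) (sconj (W b))).

Lemma gram_mxE :
  gram_mx = 'i *: (xpart_mx^T *m conjmx fpart_mx - fpart_mx^T *m conjmx xpart_mx).
Proof.
apply/matrixP => a b; rewrite !mxE /sympl -sumrB; congr (_ * _).
by apply: eq_bigr => I _; rewrite !mxE.
Qed.

Lemma gram_form (x : 'cV[C]_k) :
  let y := conjmx x in
  (conjmx x)^T *m gram_mx *m x =
  'i *: ((xpart_mx *m y)^T *m conjmx (fpart_mx *m y)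
         - (fpart_mx *m y)^T *m conjmx (xpart_mx *m y)).
Proof.
rewrite /= gram_mxE !map_mxM !trmx_mul map_mxCK -scalemxAr -scalemxAl.
by rewrite mulmxBr mulmxBl !mulmxA.
Qed.

Lemma gram_form_eq0 (x : 'cV[C]_k) :
  xpart_mx *m conjmx x = 0 -> (conjmx x)^T *m gram_mx *m x = 0.
Proof.
by move=> X0; rewrite gram_form X0 map_mx0 trmx0 mul0mx mulmx0 subrr scaler0.
Qed.

Lemma posdef_gram_xpart_ker (y : 'cV[C]_k) :
  posdef gram_mx -> xpart_mx *m y = 0 -> y = 0.
Proof.
move=> pd Xy0; apply/eqP; apply: contraT => y_neq0.
have x_neq0 : conjmx y != 0 by rewrite map_mx_eq0.
by have := pd _ x_neq0; rewrite gram_form_eq0 ?map_mxCK // mxE ltxx.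
Qed.

End SymplecticGram.

Theorem lemma7 (C : numClosedFieldType) (n : nat)
  (U : 'I_n -> svec C n.+1) (V : svec C n.+1) :
  posdef (metric_mx U V) -> X_mx U V \in unitmx.
Proof.
move=> pd; rewrite -unitmx_tr -row_free_unit; apply: inj_row_free => v vX0.
apply: trmx_inj; rewrite trmx0; apply: (posdef_gram_xpart_ker pd).
by rewrite -[X in X *m _]trmxK -trmx_mul vX0 trmx0.
Qed.
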